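(* Let $k\in\mathbb{N}$ and let $G$ be a graph that has a $T_0$-partition of width at most $k$ for some tree $T_0$. Then $G$ has a $T$-partition of width at most $k$ for some tree $T$ with $\Delta(T)\leq \max\{k\Delta(G),2\}$.
   Context: All graphs are finite and simple. $\Delta(G)$ denotes the maximum degree of $G$. For a graph $G$ and a tree $T$, a $T$-partition of $G$ is a family $(V_x : x\in V(T))$ of pairwise disjoint subsets of $V(G)$ (some possibly empty) with union $V(G)$, indexed by the nodes of $T$, such that for every edge $vw$ of $G$, if $v\in V_x$ and $w\in V_y$ then $x=y$ or $xy\in E(T)$. The width of a $T$-partition is $\max\{|V_x| : x\in V(T)\}$. *)

From mathcomp Require Import all_boot.
Set Implicit Arguments. Unset Strict Implicit. Unset Printing Implicit Defensive.

Definition simple_graph (V : finType) (e : rel V) : Prop :=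
  symmetric e /\ irreflexive e.

Definition nbhd (V : finType) (e : rel V) (x : V) : {set V} := [set y | e x y].
Definition deg (V : finType) (e : rel V) (x : V) : nat := #|nbhd e x|.
Definition max_deg (V : finType) (e : rel V) : nat := \max_(x : V) deg e x.

Definition connected_graph (V : finType) (e : rel V) : Prop :=
  forall x y : V, connect e x y.

Definition acyclic (V : finType) (e : rel V) : Prop :=
  forall s : seq V, uniq s -> 3 <= size s -> ~~ cycle e s.

Definition is_tree (T : finType) (e : rel T) : Prop :=
  0 < #|T| /\ simple_graph e /\ connected_graph e /\ acyclic e.

Definition T_partition (V : finType) (eG : rel V) (T : finType) (eT : rel T)
    (P : T -> {set V}) : Prop :=
  (forall x y : T, x != y -> [disjoint P x & P y]) /\
  (\bigcup_(x : T) P x = [set: V]) /\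
  (forall (v w : V) (x y : T), eG v w -> v \in P x -> w \in P y ->
      x = y \/ eT x y).

Definition width (V : finType) (T : finType) (P : T -> {set V}) : nat :=
  \max_(x : T) #|P x|.

From mathcomp Require Import all_boot.
Set Implicit Arguments. Unset Strict Implicit. Unset Printing Implicit Defensive.

(* Contract the given T0-partition to the graph F on V(T0) joining two parts
   exactly when G has an edge between them. F is a subgraph of T0, hence a
   forest, each part has at most k vertices, so F has maximum degree at most
   k * Delta(G), and the partition is also a T-partition for every tree T on
   V(T0) containing F. Such a tree of maximum degree at most max(k Delta(G), 2)
   is obtained by repeatedly joining two components of the forest by an edge
   between vertices of degree at most 1 (every component of a forest has one,
   namely the end of a longest path): those vertices then have degree <= 2. *)

Lemma acyclic_sub (T : finType) (F E : rel T) : subrel F E -> acyclic E -> acyclic F.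
Proof. by move=> FE Ea s uq sz; apply: contra (Ea s uq sz); apply: sub_cycle. Qed.

Lemma card_set_cond1 (T : finType) (b : bool) (c : T) : #|[set x | b && (x == c)]| <= b.
Proof.
case: b; last by rewrite cards0.
by rewrite (_ : [set x | true && (x == c)] = [set c]) ?cards1 //; apply/setP => x; rewrite !inE.
Qed.

Section AddEdge.
Variables (T : finType) (F : rel T) (u v : T).

Definition add_edge : rel T :=
  [rel a b | F a b || ((a == u) && (b == v)) || ((a == v) && (b == u))].

Lemma subrel_add_edge : subrel F add_edge.
Proof. by move=> a b Fab; rewrite /add_edge /= Fab. Qed.

Lemma add_edge_sym : symmetric F -> symmetric add_edge.
Proof.
move=> Fs a b; rewrite /add_edge /= Fs -orbA [X in _ || X]orbC orbA.
by rewrite [(b == u) && _]andbC [(b == v) && _]andbC.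
Qed.

Lemma add_edge_irr : irreflexive F -> u != v -> irreflexive add_edge.
Proof.
move=> Fi uv a; rewrite /add_edge /= Fi /=.
by case: (a =P u) => [->|]; rewrite ?(negbTE uv) //= andbF.
Qed.

Lemma deg_add_edge w : deg add_edge w <= deg F w + (w == u) + (w == v).
Proof.
rewrite /deg.
have -> : nbhd add_edge w =
    nbhd F w :|: [set x | (w == u) && (x == v)] :|: [set x | (w == v) && (x == u)].
  by apply/setP => x; rewrite !inE.
apply: leq_trans (leq_card_setU _ _) _; apply: leq_add; last exact: card_set_cond1.
by apply: leq_trans (leq_card_setU _ _) _; apply: leq_add => //; exact: card_set_cond1.
Qed.

Lemma acyclic_add_edge :
  symmetric F -> acyclic F -> ~~ connect F u v -> acyclic add_edge.
Proof.
move=> Fs Fa nFuv s uq sz; apply/negP => cy.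
have nFvu : ~~ connect F v u by rewrite (sym_connect_sym Fs).
have [us|us] := boolP (u \in s); last first.
  apply/negP: (Fa s uq sz); rewrite negbK.
  apply: (sub_in_cycle (P := mem s)) cy; last exact/allP.
  move=> a b a_s b_s; rewrite /add_edge /=.
  by case/orP=> [/orP[//|/andP[/eqP au _]]|/andP[_ /eqP bu]];
    [rewrite -au a_s in us | rewrite -bu b_s in us].
(* Rotate the cycle to start at u: the rest of it avoids u, so it is an F-path. *)
case: (rot_to us) uq sz cy => i p Erot.
rewrite -(rot_uniq i) -(size_rot i) -(rot_cycle i) Erot.
case: p Erot => [|a [|c q]] // _ uq sz cy.
have : last a (c :: q) \in c :: q := mem_last c q.
move: (c :: q) uq sz cy => {c q} p uq sz cy; set b := last a p => bp.
have [/norP[ua up] /andP[ap _]] := andP uq.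
have ab : a != b by apply: contraNneq ap => ->.
have bu : b != u by apply: contraNneq up => <-.
move: cy; rewrite /cycle rcons_cons [path _ _ (_ :: _)]/= rcons_path -/b.
case/and3P=> Eua Eap Ebu.
have pF : path F a p.
  apply: (sub_in_path (P := predC1 u)) Eap.
    move=> x y; rewrite !inE => xu yu.
    by rewrite /add_edge /= (negbTE xu) (negbTE yu) andbF !orbF.
  by rewrite /= eq_sym ua; apply/allP => x xp /=; apply: contraNneq up => <-.
have Fab : connect F a b by apply/connectP; exists p.
move: Eua Ebu; rewrite /add_edge /= eqxx [a == u]eq_sym (negbTE ua) (negbTE bu) andbF !orbF andbT.
case/orP=> [Fua|/eqP av] /orP[Fbu|/eqP bv].
- by move: (Fa _ uq sz); rewrite /cycle rcons_cons [path _ _ (_ :: _)]/= rcons_path Fua pF Fbu.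
- by apply: (negP nFuv); rewrite -bv; apply: connect_trans (connect1 Fua) Fab.
- by apply: (negP nFvu); rewrite -av; apply: connect_trans Fab (connect1 Fbu).
- by rewrite av bv eqxx in ab.
Qed.

End AddEdge.

Section Forest.
Variables (T : finType) (F : rel T).
Hypotheses (Fi : irreflexive F) (Fa : acyclic F).

Lemma uniq_path_last_nbr t p w :
  path F t p -> uniq (t :: p) -> F (last t p) w -> w \in t :: p ->
  exists a, t :: p = a ++ [:: w; last t p].
Proof.
move=> tp uq Fw; move Es: (t :: p) uq => s uq ws.
have Elast : last t p = last t s by rewrite -Es.
case/splitPr: ws Es uq Elast => a b Es uq Elast.
rewrite {}Elast last_cat /= in Fw *.
have wb_path : path F w b.
  by move: tp; rewrite -/(path F t p) -[path F t p]/(sorted F (t :: p)) Es => /cat_sorted2[].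
case: b => [|c [|d b]] in Es wb_path uq Fw *; first by rewrite Fi in Fw.
  by exists a.
have wb_uniq : uniq [:: w, c, d & b] by move: uq; rewrite cat_uniq => /and3P[].
by move: (Fa wb_uniq isT); rewrite /cycle rcons_path wb_path Fw.
Qed.

Lemma forest_leaf t : exists2 u, connect F t u & deg F u <= 1.
Proof.
(* u is the end of a longest duplicate-free path from t. *)
pose long n := [exists p : n.-tuple T, path F t p && uniq (t :: p)].
have long0 : exists n, long n by exists 0; apply/existsP; exists [tuple].
have long_bound n : long n -> n <= #|T|.
  case/existsP=> p /andP[_ uq]; apply: ltnW.
  by rewrite -(size_tuple p) -[(size p).+1]/(size (t :: p)) -(card_uniqP uq) max_card.
case: (ex_maxnP long0 long_bound) => n /existsP[p /andP[tp uq]] maxn.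
set u := last t p.
have nbr_on_path w : F u w -> w \in t :: (p : seq T).
  move=> Fuw; apply: contraT => wn; have : long n.+1.
    apply/existsP; exists (rcons_tuple p w).
    by rewrite [tval _]/= rcons_path tp Fuw -rcons_cons rcons_uniq wn.
  by move/maxn; rewrite ltnn.
exists u; first by apply/connectP; exists (tval p).
apply/card_le1P => w1; rewrite inE => Fw1 w2; rewrite inE.
apply/idP/eqP => [Fw2|->//].
have [a1 E1] := uniq_path_last_nbr tp uq Fw1 (nbr_on_path _ Fw1).
have [a2 E2] := uniq_path_last_nbr tp uq Fw2 (nbr_on_path _ Fw2).
by have := congr1 rev (etrans (esym E1) E2); rewrite !rev_cat => -[].
Qed.

End Forest.

Lemma forest_spanning_tree (T : finType) (F0 : rel T) (M : nat) :
  symmetric F0 -> irreflexive F0 -> acyclic F0 -> 2 <= M -> (forall x, deg F0 x <= M) ->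
  exists E : rel T, [/\ subrel F0 E, simple_graph E, connected_graph E, acyclic E &
                       forall x, deg E x <= M].
Proof.
move=> + + + M2; pose apart (F : rel T) := [set p : T * T | ~~ connect F p.1 p.2].
have [n] := ubnP #|apart F0|; elim: n F0 => // n IH F lt_apart Fs Fi Fa FM.
case: (set_0Vmem (apart F)) => [apart0 | [[x y]]].
  exists F; split=> // a b.
  have : (a, b) \notin apart F by rewrite apart0 inE.
  by rewrite inE negbK.
rewrite inE => /= nxy.
have [u xu du] := forest_leaf Fi Fa x.
have [v yv dv] := forest_leaf Fi Fa y.
have nuv : ~~ connect F u v.
  apply: contra nxy => uv; apply: connect_trans xu (connect_trans uv _).
  by rewrite (sym_connect_sym Fs).
have uv : u != v by apply: contraNneq nuv => ->.
pose F' := add_edge F u v.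
have sub_conn : {subset apart F' <= apart F}.
  move=> [a b]; rewrite !inE /=; apply: contra.
  by apply: connect_sub => c d Fcd; apply/connect1/subrel_add_edge.
have lt_apart' : #|apart F'| < #|apart F|.
  apply/proper_card/properP; split; first exact/subsetP.
  exists (u, v); rewrite !inE //= negbK.
  by apply: connect1; rewrite /F' /add_edge /= !eqxx orbT.
have F'M : forall w, deg F' w <= M.
  move=> w; apply: leq_trans (deg_add_edge F u v w) _.
  case: (w =P u) => [->|_].
    by rewrite (negbTE uv) addn0 addn1 (leq_trans _ M2) ?ltnS.
  case: (w =P v) => [->|_]; first by rewrite addn0 addn1 (leq_trans _ M2) ?ltnS.
  by rewrite !addn0.
have [E [F'E ? ? ? ?]] := IH F' (leq_trans lt_apart' (ltnSE lt_apart))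
  (add_edge_sym u v Fs) (add_edge_irr Fi uv) (acyclic_add_edge Fs Fa nuv) F'M.
by exists E; split=> // a b /subrel_add_edge /F'E.
Qed.

Lemma card_bigcup_le (I U : finType) (A : {pred I}) (B : I -> {set U}) :
  #|\bigcup_(i in A) B i| <= \sum_(i in A) #|B i|.
Proof.
elim/big_rec2: _ => [|i X n _ IH]; first by rewrite cards0.
by apply: leq_trans (leq_card_setU _ _) _; rewrite leq_add2l.
Qed.

Section PartGraph.
Variables (V T : finType) (eG : rel V) (P : T -> {set V}).

Definition part_graph : rel T :=
  [rel a b | (a != b) && [exists v in P a, exists w in P b, eG v w]].

Lemma part_graph_sym : symmetric eG -> symmetric part_graph.
Proof.
move=> Gs a b; rewrite /part_graph /= eq_sym; congr (_ && _).
by apply/exists_inP/exists_inP => -[v va /exists_inP[w wb vw]];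
  exists w => //; apply/exists_inP; exists v; rewrite // Gs.
Qed.

Lemma part_graph_irr : irreflexive part_graph.
Proof. by move=> a; rewrite /part_graph /= eqxx. Qed.

Lemma T_partition_part_graphP (eT : rel T) :
  T_partition eG eT P <->
  [/\ forall x y, x != y -> [disjoint P x & P y], \bigcup_x P x = [set: V] &
      subrel part_graph eT].
Proof.
split=> [[disj [cover edge]] | [disj cover sub]]; split=> //.
  move=> a b /andP[ab /exists_inP[v va /exists_inP[w wb vw]]].
  by case: (edge v w a b vw va wb) => // eab; rewrite eab eqxx in ab.
split=> // v w a b vw va wb; have [-> | ab] := eqVneq a b; [by left | right].
apply: sub; rewrite /part_graph /= ab.
by apply/exists_inP; exists v => //; apply/exists_inP; exists w.
Qed.

Lemma deg_part_graph a :
  (forall x y, x != y -> [disjoint P x & P y]) ->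
  deg part_graph a <= #|P a| * max_deg eG.
Proof.
move=> disj; pose part w := odflt a [pick x | w \in P x].
have part_mem x w : w \in P x -> part w = x.
  move=> wx; rewrite /part; case: pickP => [y wy /= | /(_ x)]; last by rewrite wx.
  by apply: contraTeq wy => yx; rewrite (disjointFl (disj _ _ yx) wx).
have sub : nbhd part_graph a \subset \bigcup_(v in P a) (part @: nbhd eG v).
  apply/subsetP => b; rewrite inE => /andP[_ /exists_inP[v va /exists_inP[w wb vw]]].
  apply/bigcupP; exists v => //; apply/imsetP; exists w; first by rewrite inE.
  by rewrite (part_mem _ _ wb).
rewrite /deg; apply: leq_trans (subset_leq_card sub) _.
apply: leq_trans (card_bigcup_le _ _) _.
rewrite -sum_nat_const; apply: leq_sum => v _.
by apply: leq_trans (leq_imset_card _ _) _; exact: (leq_bigmax (F := deg eG) v).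
Qed.

End PartGraph.

Theorem mainTheorem7 (k : nat) (V : finType) (eG : rel V) :
  simple_graph eG ->
  (exists (T0 : finType) (e0 : rel T0) (P0 : T0 -> {set V}),
      is_tree e0 /\ T_partition eG e0 P0 /\ width P0 <= k) ->
  exists (T : finType) (eT : rel T) (P : T -> {set V}),
    [/\ is_tree eT, T_partition eG eT P, width P <= k &
        max_deg eT <= maxn (k * max_deg eG) 2].
Proof.
move=> [Gs _] [T0 [e0 [P0 [[T0n [_ [_ e0a]]] [/T_partition_part_graphP[disj cover sub] wk]]]]].
set M := maxn (k * max_deg eG) 2.
have FM a : deg (part_graph eG P0) a <= M.
  apply: leq_trans (deg_part_graph eG a disj) (leq_trans _ (leq_maxl _ 2)).
  by rewrite leq_mul2r (leq_trans (leq_bigmax (F := fun x => #|P0 x|) a) wk) orbT.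
have [E [FE Es Ec Ea EM]] := forest_spanning_tree (part_graph_sym P0 Gs)
  (@part_graph_irr _ _ eG P0) (acyclic_sub sub e0a) (leq_maxr _ _) FM.
exists T0, E, P0; split=> //.
- by apply/T_partition_part_graphP; split=> // a b /FE.
- exact/bigmax_leqP.
Qed.
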